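(* Let $\Gamma=(N,A,u)$ be a finite normal form game with $N=\{1,\dots,n\}$ and $n\ge3$, in which every player has the same strategy set $X$, so $A=X^n$. The following are equivalent: (i) $\Gamma$ is fully symmetric (i.e. $u_i=u_{\pi(i)}\circ\pi$ for all $i\in N$ and $\pi\in S_N$) and $u_i=u_j$ for all $i,j\in N$; (ii) for each $i\in N$ and $\pi\in S_N$, $u_i=u_{\pi(i)}\circ\pi^{-1}$.
   Context: For $\sigma\in S_N$ and $s\in A$ write $\sigma(s)=(s_{\sigma^{-1}(i)})_{i\in N}$, and for $f:A\to\mathbb{R}$, $f\circ\sigma$ denotes the map $s\mapsto f(\sigma(s))$. $u_i:A\to\mathbb{R}$ is the utility function of player $i$. *)

From HB Require Import structures.
From mathcomp Require Import all_boot all_order all_algebra all_fingroup.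
Set Implicit Arguments. Unset Strict Implicit. Unset Printing Implicit Defensive.
Import GRing.Theory Num.Theory.
Local Open Scope ring_scope.

Definition profile (n : nat) (X : finType) := {ffun 'I_n -> X}.

Definition pact (n : nat) (X : finType) (sigma : {perm 'I_n}) (s : profile n X)
  : profile n X := [ffun i => s (sigma^-1 i)%g].

Definition compp (n : nat) (X : finType) (R : Type) (f : profile n X -> R)
  (sigma : {perm 'I_n}) : profile n X -> R := fun s => f (pact sigma s).

Definition fully_symmetric (n : nat) (X : finType) (R : Type)
  (u : 'I_n -> profile n X -> R) : Prop :=
  forall (i : 'I_n) (pi : {perm 'I_n}), u i = compp (u (pi i)) pi.

(* Write (ii) as u_{g i} y = u_i (g y).  Since g y is a right action of the
   permutations, u_{h (g i)} = u_{g (h i)} for all g, h, i.  When j <> c and i is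
   a third player, g = (i j) and h = (j c) give u_c = u_j, so all utilities
   coincide, and then (ii) says that this common utility is invariant under
   every permutation of the profile, which is (i). *)
From mathcomp Require Import all_boot all_order all_algebra all_fingroup.
From Stdlib Require Import FunctionalExtensionality.

Set Implicit Arguments.
Unset Strict Implicit.
Unset Printing Implicit Defensive.

Section ProfileAction.
Variables (n : nat) (X : finType).

Lemma pactM (s t : {perm 'I_n}) (y : profile n X) :
  pact s (pact t y) = pact (t * s)%g y.
Proof. by apply/ffunP => x; rewrite !ffunE invMg permM. Qed.

Lemma pact1 (y : profile n X) : pact 1%g y = y.
Proof. by apply/ffunP => x; rewrite !ffunE invg1 perm1. Qed.

End ProfileAction.

Lemma exists_ord_neq2 (n : nat) (a b : 'I_n) :
  (3 <= n)%N -> exists c : 'I_n, (c != a) && (c != b).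
Proof.
move=> n3; have /subsetPn [c _] : ~~ ([set: 'I_n] \subset [set a; b]).
  apply/negP => /subset_leq_card; rewrite cardsT card_ord.
  by move/(leq_trans n3)/leq_trans/(_ (leq_card_setU [set a] [set b])); rewrite !cards1.
by rewrite !inE negb_or => cab; exists c.
Qed.

Section EquivariantUtilities.
Variables (R : Type) (n : nat) (X : finType) (u : 'I_n -> profile n X -> R).
Hypothesis u_equiv : forall (i : 'I_n) (pi : {perm 'I_n}),
  u i = compp (u (pi i)) (pi^-1)%g.

Lemma equiv_pact (i : 'I_n) (g : {perm 'I_n}) (y : profile n X) :
  u (g i) y = u i (pact g y).
Proof. by rewrite (u_equiv i g) /compp pactM mulgV pact1. Qed.

Lemma equiv_perm_comm (i : 'I_n) (g h : {perm 'I_n}) :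
  u (h (g i)) = u (g (h i)).
Proof.
apply: functional_extensionality => y.
by rewrite -permM equiv_pact -pactM -equiv_pact -equiv_pact.
Qed.

Lemma equiv_utility_eq (j c : 'I_n) : (3 <= n)%N -> u j = u c.
Proof.
move=> n3; have [->|jc] := eqVneq j c; first by [].
have [i /andP[ij ic]] := exists_ord_neq2 j c n3.
have := equiv_perm_comm i (tperm i j) (tperm j c).
rewrite tpermL tpermL (@tpermD _ j c i) ?tpermL; first by move=> ->.
  by rewrite eq_sym.
by rewrite eq_sym.
Qed.

Lemma equiv_pact_invariant (i : 'I_n) (g : {perm 'I_n}) (y : profile n X) :
  (3 <= n)%N -> u i (pact g y) = u i y.
Proof. by move=> n3; rewrite -equiv_pact (equiv_utility_eq (g i) i n3). Qed.

End EquivariantUtilities.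

Theorem theorem3p18 (R : realFieldType) (n : nat) (X : finType)
  (u : 'I_n -> profile n X -> R) :
  (3 <= n)%N ->
  ((fully_symmetric u /\ (forall i j : 'I_n, u i = u j)) <->
   (forall (i : 'I_n) (pi : {perm 'I_n}), u i = compp (u (pi i)) (pi^-1)%g)).
Proof.
move=> n3; split.
  by case=> u_sym u_eq i pi; rewrite {1}(u_sym i pi^-1%g) (u_eq (pi^-1 i)%g (pi i)).
move=> u_equiv; have u_eq := equiv_utility_eq u_equiv.
split=> [i pi|i j]; last exact: u_eq.
apply: functional_extensionality => y.
by rewrite /compp (u_eq (pi i) i n3) (equiv_pact_invariant u_equiv).
Qed.
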